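(* Let $q$ be a prime power, and let $g(x)\in\mathbb{F}_q[x]$ be a monic divisor of $x^{2n}-1$ with $g(x)\neq x^{2n}-1$ and $k=\deg g$. Let $\mathscr{D}=\langle g(x)\rangle$ be the $q$-ary linear cyclic code of length $2n$ generated by $g$. Let $h(x)=(x^{2n}-1)/g(x)=h_0+h_1x+\cdots+h_{2n-k}x^{2n-k}$, $h^*(x)=\frac{1}{h_{2n-k}}x^{2n-k}h(1/x)$, and let $V_{h^*(x)}\in\mathbb{F}_q^{2n}$ be the coefficient vector of $h^*(x)$ (padded with zeros). Then the $k$ vectors $\tau(V_{h^*(x)}),\tau(\sigma(V_{h^*(x)})),\ldots,\tau(\sigma^{k-1}(V_{h^*(x)}))$ are the rows of a generator matrix of the symplectic dual code $\mathscr{D}^{\perp_s}$.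
   Context: $\sigma(v_0,\ldots,v_{2n-1})=(v_{2n-1},v_0,\ldots,v_{2n-2})$ is the cyclic shift and $\tau(v_0,\ldots,v_{2n-1})=(-v_n,\ldots,-v_{2n-1},v_0,\ldots,v_{n-1})$. The symplectic inner product on $\mathbb{F}_q^{2n}$ is $\langle u,v\rangle_s=\sum_{i=0}^{n-1}(u_iv_{n+i}-u_{n+i}v_i)$ and $\mathscr{D}^{\perp_s}=\{v:\langle u,v\rangle_s=0\ \forall u\in\mathscr{D}\}$. Vectors of $\mathbb{F}_q^{2n}$ are identified with polynomials of degree $<2n$ modulo $x^{2n}-1$. *)

From HB Require Import structures.
From mathcomp Require Import all_boot all_order all_algebra.
Set Implicit Arguments. Unset Strict Implicit. Unset Printing Implicit Defensive.
Import GRing.Theory.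
Local Open Scope ring_scope.

(* Vectors of F^(2n) are row vectors 'rV[F]_(n + n); coordinates
   0..n-1 are the "left" block (lshift) and n..2n-1 the "right" block (rshift). *)

(* index (j mod m) in 'I_m, given some i : 'I_m witnessing m > 0 *)
Definition mod_idx (m : nat) (i : 'I_m) (j : nat) : 'I_m :=
  Ordinal (ltn_pmod j (leq_ltn_trans (leq0n i) (ltn_ord i))).

(* cyclic shift: sigma(v_0,...,v_{m-1}) = (v_{m-1}, v_0, ..., v_{m-2}) *)
Definition cshift (F : fieldType) (m : nat) (v : 'rV[F]_m) : 'rV[F]_m :=
  \row_(i < m) v 0 (mod_idx i (i + m.-1)%N).

Definition tau (F : fieldType) (n : nat) (v : 'rV[F]_(n + n)) : 'rV[F]_(n + n) :=
  row_mx (- rsubmx v) (lsubmx v).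

Definition symp (F : fieldType) (n : nat) (u v : 'rV[F]_(n + n)) : F :=
  \sum_(i < n) (u 0 (lshift n i) * v 0 (rshift n i)
                - u 0 (rshift n i) * v 0 (lshift n i)).

Definition cyclic_code (F : fieldType) (m : nat) (g : {poly F}) : 'rV[F]_m -> Prop :=
  fun v => exists f : {poly F}, rVpoly v = (f * g) %% ('X^m - 1).

Definition symp_dual (F : fieldType) (n : nat) (D : 'rV[F]_(n + n) -> Prop)
  : 'rV[F]_(n + n) -> Prop :=
  fun v => forall u, D u -> symp u v = 0.

(* h*(x) = (1 / lead_coef h) x^(deg h) h(1/x) *)
Definition recip_monic (F : fieldType) (h : {poly F}) : {poly F} :=
  (lead_coef h)^-1 *: \poly_(i < size h) h`_((size h).-1 - i).

From HB Require Import structures.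
From mathcomp Require Import all_boot all_order all_algebra.
From mathcomp Require Import zify.
Set Implicit Arguments.
Unset Strict Implicit.
Unset Printing Implicit Defensive.
Import GRing.Theory.
Local Open Scope ring_scope.

(* Write m = 2n and h g = X^m - 1.  The code <g> is the row space of the
   matrix G with rows X^j g (j < deg h), and tau is right multiplication by an
   invertible matrix J with <u, v>_s = - u . tau(v); so v is in the symplectic
   dual iff tau(v) is orthogonal to the rows of G.  The rows X^i h* (i < deg g)
   of a matrix M0 are orthogonal to the rows of G: up to the factor
   1 / lead_coef h their dot products are coefficients of X^j (X^m - 1) of
   degree strictly between j and j + m.  As M0 and G have full ranks deg g and
   deg h, with deg g + deg h = m, M0 spans the orthogonal complement of G.
   Finally sigma^i V = X^i h* (no wrap-around occurs), so the given matrix is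
   M0 J, whose row space is tau^-1 of that of M0, i.e. the symplectic dual. *)

Section PolyRows.
Variable F : fieldType.
Implicit Types p h : {poly F}.

Definition shiftmx m p r : 'M[F]_(r, m) := \matrix_(i < r) poly_rV ('X^i * p).

Lemma rVpoly_sum r (c : 'rV[F]_r) : rVpoly c = \sum_(i < r) c 0 i *: 'X^i.
Proof. by rewrite /rVpoly poly_def; apply: eq_bigr => i _; rewrite valK. Qed.

Lemma mul_shiftmx m p r (c : 'rV[F]_r) :
  c *m shiftmx m p r = poly_rV (rVpoly c * p).
Proof.
rewrite mulmx_sum_row rVpoly_sum mulr_suml linear_sum.
by apply: eq_bigr => i _; rewrite rowK -scalerAl linearZ.
Qed.

Lemma size_rVpoly r (c : 'rV[F]_r) : (size (rVpoly c) <= r)%N.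
Proof. exact: size_poly. Qed.

Lemma size_rVpolyM r (c : 'rV[F]_r) p : (size (rVpoly c * p)%R <= (r + size p).-1)%N.
Proof.
apply: leq_trans (size_polyMleq _ _) _.
by rewrite -!subn1 leq_sub2r // leq_add2r size_rVpoly.
Qed.

Lemma shiftmx_free m p r :
  p != 0 -> (r + size p <= m.+1)%N -> row_free (shiftmx m p r).
Proof.
move=> p_neq0 le_rp; apply/inj_row_free => c; rewrite mul_shiftmx.
have le_m : (size (rVpoly c * p)%R <= m)%N.
  have := size_rVpolyM c p; lia.
move/(congr1 rVpoly); rewrite linear0 poly_rV_K // => /eqP.
rewrite mulf_eq0 (negbTE p_neq0) orbF => /eqP c0.
by rewrite -[c]rVpolyK c0 linear0.
Qed.

Lemma cshift_poly_rV m p :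
  (size p < m)%N -> cshift (poly_rV p : 'rV[F]_m) = poly_rV ('X * p).
Proof.
move=> lt_pm; apply/rowP; case: m lt_pm => [|m] lt_pm t; first by case: t.
rewrite !mxE /= coefXM; have tm := ltn_ord t.
case: eqP => [-> | /eqP t_neq0].
  by rewrite add0n modn_small ?nth_default.
have -> : (t + m = t.-1 + m.+1)%N by lia.
by rewrite modnDr modn_small //; lia.
Qed.

Lemma iter_cshift_poly_rV m p i :
  (size p + i <= m)%N -> iter i (@cshift F m) (poly_rV p) = poly_rV ('X^i * p).
Proof.
elim: i => [|i IH] le_m; first by rewrite mul1r.
rewrite iterS IH; last by lia.
rewrite cshift_poly_rV ?exprS ?mulrA //.
apply: leq_ltn_trans (size_polyMleq _ _) _; rewrite size_polyXn; lia.
Qed.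

Lemma coefXn_recip_monic h i t :
  ('X^i * recip_monic h)`_t =
  if (t <= i + (size h).-1)%N then (lead_coef h)^-1 * h`_(i + (size h).-1 - t)
  else 0.
Proof.
have [->|h_neq0] := eqVneq h 0.
  by rewrite coefXnM coefZ lead_coef0 invr0 !mul0r !if_same.
have [s size_hE] : exists s, size h = s.+1.
  by exists (size h).-1; rewrite prednK // size_poly_gt0.
rewrite coefXnM coefZ coef_poly size_hE /=.
case: (ltnP t i) => [lt_ti|le_it].
  rewrite ifT; last by lia.
  by rewrite nth_default ?mulr0 // size_hE; lia.
case: (ltnP (t - i) s.+1) => [lt_ts|ge_ts].
  rewrite ifT; last by lia.
  by have -> : (s - (t - i) = i + s - t)%N by lia.
by rewrite ifF ?mulr0 //; lia.
Qed.

Lemma size_recip_monic h : (size (recip_monic h) <= size h)%N.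
Proof. exact: leq_trans (size_scale_leq _ _) (size_poly _ _). Qed.

Lemma recip_monic_neq0 h : h != 0 -> recip_monic h != 0.
Proof.
move=> h_neq0; apply/eqP => /(congr1 (fun p => p`_0)).
have := coefXn_recip_monic h 0 0; rewrite expr0 mul1r add0n subn0 => -> /=.
by rewrite -lead_coefE mulVf ?lead_coef_eq0 // coef0; apply/eqP; rewrite oner_eq0.
Qed.

Lemma dot_recip_monic h (b : {poly F}) m i : (i + (size h).-1 < m)%N ->
  \sum_(t < m) ('X^i * recip_monic h)`_t * b`_t =
  (lead_coef h)^-1 * (b * h)`_(i + (size h).-1).
Proof.
set e := (i + (size h).-1)%N => lt_em.
rewrite coefM mulr_sumr.
rewrite (big_ord_widen m (fun t => (lead_coef h)^-1 * (b`_t * h`_(e - t)))) //.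
rewrite [RHS]big_mkcond /=; apply: eq_bigr => t _.
rewrite coefXn_recip_monic -/e ltnS; case: ifP => _; last by rewrite mul0r.
by rewrite mulrAC mulrA.
Qed.

End PolyRows.

Lemma submx_orthogonal_compl (F : fieldType) m r s (A : 'M[F]_(r, m))
    (B : 'M[F]_(s, m)) (w : 'rV[F]_m) :
  A *m B^T = 0 -> row_free A -> row_free B -> (r + s = m)%N ->
  (w <= A)%MS = (w *m B^T == 0).
Proof.
move=> AB0 /eqP rankA /eqP rankB rsm.
have sAK : (A <= kermx B^T)%MS by apply/sub_kermxP.
have /eqmxP eqAK : (A == kermx B^T)%MS.
  by rewrite -(mxrank_leqif_eq sAK) mxrank_ker mxrank_tr rankA rankB; lia.
by rewrite eqAK sub_kermx.
Qed.

Section CyclicCode.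
Variables (F : fieldType) (m : nat) (g h : {poly F}).
Hypotheses (m_gt0 : (0 < m)%N) (hgE : h * g = 'X^m - 1).

Lemma Xn_sub_1_factors : [/\ h != 0, g != 0 & ((size h).-1 + (size g).-1 = m)%N].
Proof.
have size_hg : size (h * g) = m.+1 by rewrite hgE -polyC1 size_XnsubC.
have h_neq0 : h != 0 by apply: contra_eq_neq size_hg => ->; rewrite mul0r size_poly0.
have g_neq0 : g != 0 by apply: contra_eq_neq size_hg => ->; rewrite mulr0 size_poly0.
split=> //; move: size_hg (size_poly_gt0 h) (size_poly_gt0 g).
rewrite size_mul // h_neq0 g_neq0.
by case: (size h) => // a; case: (size g) => // b; rewrite addSn addnS => -[].
Qed.

Lemma cyclic_codeP v : cyclic_code g v <-> (v <= shiftmx m g (size h).-1)%MS.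
Proof.
have [h_neq0 g_neq0 deg_hg] := Xn_sub_1_factors.
have size_h_gt0 : (0 < size h)%N by rewrite size_poly_gt0.
have size_g_gt0 : (0 < size g)%N by rewrite size_poly_gt0.
have reduced (r : {poly F}) : (size r < size h)%N -> (r * g) %% ('X^m - 1) = r * g.
  move=> lt_rh; rewrite modp_small // -hgE (size_mul h_neq0 g_neq0).
  rewrite (leq_ltn_trans (size_polyMleq r g)) // -ltnS !prednK ?ltn_add2r //;
  by rewrite addn_gt0 size_g_gt0 orbT.
split=> [[f fE] | /submxP[c ->]].
  apply/submxP; exists (poly_rV (f %% h)).
  rewrite mul_shiftmx poly_rV_K; last by have := ltn_modpN0 f h_neq0; case: (size h).
  rewrite -[v]rVpolyK fE {1}(divp_eq f h) mulrDl -mulrA hgE modpD modp_mull add0r.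
  by rewrite reduced // ltn_modpN0.
rewrite mul_shiftmx; exists (rVpoly c).
rewrite reduced; last by rewrite (leq_ltn_trans (size_rVpoly c)) // ltn_predL.
rewrite poly_rV_K // (leq_trans (size_rVpolyM c g)) //.
by rewrite -[size g](prednK size_g_gt0) addnS deg_hg.
Qed.

Lemma recip_shiftmx_orthogonal :
  shiftmx m (recip_monic h) (size g).-1 *m (shiftmx m g (size h).-1)^T = 0.
Proof.
have [h_neq0 g_neq0 deg_hg] := Xn_sub_1_factors.
apply/matrixP => i j; rewrite !mxE.
under eq_bigr => t _ do rewrite !mxE.
have lt_i := ltn_ord i; have lt_j := ltn_ord j.
rewrite dot_recip_monic; last by lia.
rewrite -mulrA [g * h]mulrC hgE coefXnM ifF; last by lia.
rewrite coefB coefXn coef1.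
have [/negPf -> /negPf ->] : (i + (size h).-1 - j != m)%N /\ (i + (size h).-1 - j != 0)%N.
  by split; apply/eqP; lia.
by rewrite subrr mulr0.
Qed.

Lemma recip_shiftmx_free : row_free (shiftmx m (recip_monic h) (size g).-1).
Proof.
have [h_neq0 _ deg_hg] := Xn_sub_1_factors.
apply: shiftmx_free; first exact: recip_monic_neq0.
have := size_recip_monic h; have : (size h).-1.+1 = size h by rewrite prednK // size_poly_gt0.
lia.
Qed.

Lemma iter_cshift_recip i : (i < (size g).-1)%N ->
  iter i (@cshift F m) (poly_rV (recip_monic h)) = poly_rV ('X^i * recip_monic h).
Proof.
have [h_neq0 _ deg_hg] := Xn_sub_1_factors.
move=> lt_ig; apply: iter_cshift_poly_rV.
have := size_recip_monic h; have : (size h).-1.+1 = size h by rewrite prednK // size_poly_gt0.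
lia.
Qed.

Lemma recip_shiftmx_rowspace (w : 'rV[F]_m) :
  (w <= shiftmx m (recip_monic h) (size g).-1)%MS =
  (w *m (shiftmx m g (size h).-1)^T == 0).
Proof.
have [_ g_neq0 deg_hg] := Xn_sub_1_factors.
apply: submx_orthogonal_compl.
- exact: recip_shiftmx_orthogonal.
- exact: recip_shiftmx_free.
- apply: shiftmx_free => //.
  have : (size g).-1.+1 = size g by rewrite prednK // size_poly_gt0.
  lia.
- by rewrite addnC.
Qed.

End CyclicCode.

Section Symplectic.
Variables (F : fieldType) (n : nat).

Definition tau_mx : 'M[F]_(n + n) := block_mx 0 1%:M (-1%:M) 0.

Lemma tauE v : tau v = v *m tau_mx.
Proof.
rewrite /tau /tau_mx -{3}(hsubmxK v) mul_row_block !mulmx0 mulmxN !mulmx1.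
by rewrite addr0 add0r.
Qed.

Lemma tau_mx_sqr : tau_mx *m tau_mx = - 1%:M.
Proof.
rewrite /tau_mx mulmx_block !mul0mx !mulmx0 !mul1mx mulmx1 sub0r !addr0.
by rewrite [in RHS]scalar_mx_block opp_block_mx oppr0.
Qed.

Lemma tau_mx_free : row_free tau_mx.
Proof. by apply/row_freeP; exists (- tau_mx); rewrite mulmxN tau_mx_sqr opprK. Qed.

Lemma symp_tau (u v : 'rV[F]_(n + n)) : symp u v = - (u *m (tau v)^T) 0 0.
Proof.
rewrite mxE big_split_ord /= opprD -!sumrN -big_split /=.
apply: eq_bigr => i _; rewrite !mxE (unsplitK (inl _ i)) (unsplitK (inr _ i)) !mxE.
by rewrite mulrN opprK.
Qed.

Lemma submx_mul_tau_mx r (A : 'M[F]_(r, n + n)) v :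
  (v <= A *m tau_mx)%MS = (tau v <= A)%MS.
Proof.
by rewrite -(submxMfree _ _ tau_mx_free) -mulmxA tau_mx_sqr mulmxN mulmx1 eqmx_opp tauE.
Qed.

Lemma symp_dual_rowspace r (G : 'M[F]_(r, n + n)) (D : 'rV[F]_(n + n) -> Prop) v :
  (forall u, D u <-> (u <= G)%MS) -> symp_dual D v <-> tau v *m G^T = 0.
Proof.
move=> DG; split=> [orth | tvG u /DG /submxP[c ->]].
  apply/rowP => j; rewrite !mxE -[RHS]oppr0 -[in RHS](orth (row j G)).
    by rewrite symp_tau opprK mxE; apply: eq_bigr => t _; rewrite !mxE mulrC.
  exact/DG/row_sub.
rewrite symp_tau -mulmxA -[G *m _]trmxK trmx_mul trmxK tvG.
by rewrite trmx0 mulmx0 mxE oppr0.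
Qed.

End Symplectic.

Theorem lemma4p4 (F : finFieldType) (n : nat) (g : {poly F}) :
  (0 < n)%N ->
  g \is monic ->
  g %| 'X^(n + n) - 1 ->
  g != 'X^(n + n) - 1 ->
  let k := (size g).-1 in
  let h := ('X^(n + n) - 1) %/ g in
  let V : 'rV[F]_(n + n) := poly_rV (recip_monic h) in
  let M : 'M[F]_(k, n + n) := \matrix_(i < k) tau (iter i (@cshift F (n + n)) V) in
  row_free M /\
  (forall v : 'rV[F]_(n + n),
      (v <= M)%MS <-> symp_dual (@cyclic_code F (n + n)%N g) v).
Proof.
move=> n_gt0 _ g_dvd _ k h V M.
have m_gt0 : (0 < n + n)%N by rewrite addn_gt0 n_gt0.
have hgE : h * g = 'X^(n + n) - 1 by rewrite divpK.
set M0 := shiftmx (n + n) (recip_monic h) k.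
have ME : M = M0 *m tau_mx F n.
  apply/row_matrixP => i; rewrite row_mul !rowK tauE.
  by rewrite (iter_cshift_recip m_gt0 hgE (ltn_ord i)).
split.
  by rewrite ME /row_free mxrankMfree ?tau_mx_free //; apply: recip_shiftmx_free.
move=> v; rewrite ME submx_mul_tau_mx (recip_shiftmx_rowspace m_gt0 hgE).
rewrite (symp_dual_rowspace _ (cyclic_codeP m_gt0 hgE)).
by split=> /eqP.
Qed.
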